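(* Let $K$ be a nonempty finite set and $X=\Delta(K)$. If $f,g\in D_0$ and $\lambda\in[0,1]$, then each of the following belongs to $D_0$: - $-f$, - $\max\{f,g\}$, - $\min\{f,g\}$, - $\lambda f+(1-\lambda)g$. Moreover, the linear span of $D_0$ is dense in $\mathcal C(X)$ for the uniform norm.
   Context: $X=\Delta(K)=\{p\in\mathbb R_+^K:\sum_k p^k=1\}$. $D_0$ (''non revealing functions'') is the set of functions $f:X\to\mathbb R$ of the following form. There exist: - nonempty finite sets $I,J$, and - matrices $(G^k)_{k\in K}$ in $[-1,1]^{I\times J}$, such that for all $p\in X$, $f(p)=\mathrm{Val}\big(\sum_{k\in K}p^kG^k\big)$. Here $\mathrm{Val}(M)=\max_{x\in\Delta(I)}\min_{y\in\Delta(J)}\sum_{i,j}x(i)y(j)M(i,j)$ is the value of the zero-sum matrix game $M$. *)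

From Stdlib Require Import Reals Lra Lia.
Open Scope R_scope.

(* Finite index sets are represented as {0,...,n-1} (n : nat).
   Vectors indexed by such a set are functions nat -> R (only the
   entries with index < n matter). *)

Fixpoint sumR (n : nat) (f : nat -> R) : R :=
  match n with
  | O => 0
  | S n' => sumR n' f + f n'
  end.

Definition simplex (n : nat) (p : nat -> R) : Prop :=
  (forall i, (i < n)%nat -> 0 <= p i) /\ sumR n p = 1.

Definition payoff (m n : nat) (M : nat -> nat -> R) (x y : nat -> R) : R :=
  sumR m (fun i => sumR n (fun j => x i * y j * M i j)).

Definition is_min_payoff (m n : nat) (M : nat -> nat -> R) (x : nat -> R) (w : R) : Prop :=
  (exists y, simplex n y /\ payoff m n M x y = w) /\
  (forall y, simplex n y -> w <= payoff m n M x y).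

Definition IsVal (m n : nat) (M : nat -> nat -> R) (v : R) : Prop :=
  (exists x, simplex m x /\ is_min_payoff m n M x v) /\
  (forall x w, simplex m x -> is_min_payoff m n M x w -> w <= v).

(* D_0 on X = Delta({0..k-1}): non revealing functions.  A function
   f : (nat -> R) -> R represents a function on X (only its values on
   X are constrained). *)
Definition D0 (k : nat) (f : (nat -> R) -> R) : Prop :=
  exists (m n : nat) (G : nat -> nat -> nat -> R),
    (1 <= m)%nat /\ (1 <= n)%nat /\
    (forall l i j, (l < k)%nat -> (i < m)%nat -> (j < n)%nat ->
        -1 <= G l i j <= 1) /\
    (forall p, simplex k p ->
        IsVal m n (fun i j => sumR k (fun l => p l * G l i j)) (f p)).

Definition continuous_on_simplex (k : nat) (h : (nat -> R) -> R) : Prop :=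
  forall p, simplex k p -> forall e, 0 < e -> exists d, 0 < d /\
    forall q, simplex k q -> (forall i, (i < k)%nat -> Rabs (p i - q i) < d) ->
      Rabs (h p - h q) < e.

(* Everything rests on the minimax theorem, derived here from
   Gordan's theorem of the alternative (itself proved by Fourier-Motzkin
   elimination): the value of a game is attained at a saddle point.  Saddle
   points are then transported along three constructions on games: exchanging
   the players (value -v), letting the row player choose which of two games is
   played (value max a b), and playing two games independently with averaged
   payoffs (value lam a + (1 - lam) b).  This gives the closure of D_0 under
   negation, max and convex combinations; min follows by duality.

   For the density, linear functions with coefficients in [-1,1] are values of
   1x1 games, so the cones p |-> (a + K |p - v|_oo) / C, being maxima of such
   functions, lie in D_0.  By compactness of the simplex (finite covers, hence
   uniform continuity and boundedness), a continuous h is uniformly within eps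
   of C times the minimum of finitely many cones with apexes on a fine net. *)

From Stdlib Require Import Reals Lra Lia List RList Classical ClassicalEpsilon
  FunctionalExtensionality.
From Coquelicot Require Compactness.
Open Scope R_scope.

Lemma sumR_ext n f g : (forall i, (i < n)%nat -> f i = g i) -> sumR n f = sumR n g.
Proof.
  induction n as [|n IH]; intros H; simpl; [reflexivity|].
  rewrite IH by (intros; apply H; lia). rewrite H by lia. reflexivity.
Qed.

Lemma sumR_plus n f g : sumR n (fun i => f i + g i) = sumR n f + sumR n g.
Proof. induction n as [|n IH]; simpl; [lra|]. rewrite IH; lra. Qed.

Lemma sumR_scal n c f : sumR n (fun i => c * f i) = c * sumR n f.
Proof. induction n as [|n IH]; simpl; [lra|]. rewrite IH; lra. Qed.

Lemma sumR_opp n f : sumR n (fun i => - f i) = - sumR n f.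
Proof. induction n as [|n IH]; simpl; [lra|]. rewrite IH; lra. Qed.

Lemma sumR_const n c : sumR n (fun _ => c) = INR n * c.
Proof. induction n as [|n IH]; simpl sumR; [simpl; lra|]. rewrite IH, S_INR; ring. Qed.

Lemma sumR_zero n : sumR n (fun _ => 0) = 0.
Proof. rewrite sumR_const; ring. Qed.

Lemma sumR_le n f g : (forall i, (i < n)%nat -> f i <= g i) -> sumR n f <= sumR n g.
Proof.
  induction n as [|n IH]; intros H; simpl; [lra|].
  assert (f n <= g n) by (apply H; lia).
  assert (sumR n f <= sumR n g) by (apply IH; intros; apply H; lia). lra.
Qed.

Lemma sumR_nonneg n f : (forall i, (i < n)%nat -> 0 <= f i) -> 0 <= sumR n f.
Proof. intros H. rewrite <- (sumR_zero n). apply sumR_le; assumption. Qed.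

Lemma sumR_term_le n f i :
  (forall j, (j < n)%nat -> 0 <= f j) -> (i < n)%nat -> f i <= sumR n f.
Proof.
  induction n as [|n IH]; intros H Hi; [lia|]. simpl.
  assert (0 <= f n) by (apply H; lia).
  destruct (Nat.eq_dec i n) as [->|Hne].
  - assert (0 <= sumR n f) by (apply sumR_nonneg; intros; apply H; lia). lra.
  - assert (f i <= sumR n f) by (apply IH; [intros; apply H|]; lia). lra.
Qed.

Lemma sumR_nonneg_eq0 n f : (forall i, (i < n)%nat -> 0 <= f i) -> sumR n f = 0 ->
  forall i, (i < n)%nat -> f i = 0.
Proof.
  intros H Hs i Hi. pose proof (sumR_term_le n f i H Hi). pose proof (H i Hi). lra.
Qed.

Lemma sumR_swap m n F :
  sumR m (fun i => sumR n (fun j => F i j)) = sumR n (fun j => sumR m (fun i => F i j)).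
Proof.
  induction m as [|m IH]; simpl; [rewrite sumR_zero; reflexivity|].
  rewrite IH, <- sumR_plus. reflexivity.
Qed.

Lemma sumR_split a b f : sumR (a + b) f = sumR a f + sumR b (fun i => f (a + i)%nat).
Proof.
  induction b as [|b IH]; simpl; [rewrite Nat.add_0_r; lra|].
  rewrite Nat.add_succ_r; simpl. rewrite IH; lra.
Qed.

Lemma sumR_blocks p q F :
  sumR (p * q) F = sumR q (fun b => sumR p (fun a => F (a + p * b)%nat)).
Proof.
  induction q as [|q IH]; simpl; [rewrite Nat.mul_0_r; reflexivity|].
  rewrite Nat.mul_succ_r, sumR_split, IH. f_equal.
  apply sumR_ext; intros. f_equal; lia.
Qed.

Definition unit_vec (j : nat) : nat -> R := fun i => if Nat.eqb i j then 1 else 0.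

Lemma sumR_unit_vec n j f : (j < n)%nat -> sumR n (fun i => unit_vec j i * f i) = f j.
Proof.
  induction n as [|n IH]; intros Hj; [lia|]. simpl. unfold unit_vec at 2.
  destruct (Nat.eq_dec j n) as [->|Hne].
  - rewrite Nat.eqb_refl, (sumR_ext n _ (fun _ => 0)), sumR_zero; [ring|].
    intros i Hi. unfold unit_vec. destruct (Nat.eqb_spec i n); [lia|ring].
  - rewrite IH by lia. destruct (Nat.eqb_spec n j); [lia|ring].
Qed.

Lemma simplex_unit_vec n j : (j < n)%nat -> simplex n (unit_vec j).
Proof.
  intros Hj. split.
  - intros i _. unfold unit_vec. destruct (Nat.eqb i j); lra.
  - rewrite (sumR_ext n _ (fun i => unit_vec j i * 1)) by (intros; ring).
    apply sumR_unit_vec; assumption.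
Qed.

Lemma simplex_dim_pos n x : simplex n x -> (1 <= n)%nat.
Proof. intros [_ H]. destruct n; simpl in H; [lra|lia]. Qed.

Lemma simplex_coord_bound n x i : simplex n x -> (i < n)%nat -> 0 <= x i <= 1.
Proof. intros [H S] Hi. split; [auto|]. rewrite <- S. apply sumR_term_le; assumption. Qed.

Lemma simplex_avg_ge n y a c : simplex n y -> (forall j, (j < n)%nat -> c <= a j) ->
  c <= sumR n (fun j => y j * a j).
Proof.
  intros [Hy Hs] H.
  replace c with (sumR n (fun j => y j * c))
    by (rewrite (sumR_ext _ _ (fun j => c * y j)) by (intros; ring);
        rewrite sumR_scal, Hs; ring).
  apply sumR_le; intros. apply Rmult_le_compat_l; auto.
Qed.

Lemma simplex_avg_le n y a c : simplex n y -> (forall j, (j < n)%nat -> a j <= c) ->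
  sumR n (fun j => y j * a j) <= c.
Proof.
  intros Hy H. rewrite <- (Ropp_involutive c), <- (Ropp_involutive (sumR _ _)).
  apply Ropp_le_contravar. rewrite <- sumR_opp.
  rewrite (sumR_ext _ _ (fun j => y j * - a j)) by (intros; ring).
  apply simplex_avg_ge; [assumption|]. intros j Hj. specialize (H j Hj). lra.
Qed.

Lemma simplex_normalize n y : (forall j, (j < n)%nat -> 0 <= y j) -> 0 < sumR n y ->
  simplex n (fun j => y j / sumR n y).
Proof.
  intros H Hs. split.
  - intros j Hj. unfold Rdiv. apply Rmult_le_pos; [auto|]. apply Rlt_le, Rinv_0_lt_compat; auto.
  - unfold Rdiv. rewrite (sumR_ext _ _ (fun j => / sumR n y * y j)) by (intros; ring).
    rewrite sumR_scal. field. lra.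
Qed.

(** * Matrix games and saddle points *)

Lemma payoff_rows m n M x y :
  payoff m n M x y = sumR m (fun i => x i * sumR n (fun j => y j * M i j)).
Proof.
  unfold payoff. apply sumR_ext; intros.
  rewrite <- sumR_scal. apply sumR_ext; intros; ring.
Qed.

Lemma payoff_cols m n M x y :
  payoff m n M x y = sumR n (fun j => y j * sumR m (fun i => x i * M i j)).
Proof.
  unfold payoff. rewrite sumR_swap. apply sumR_ext; intros.
  rewrite <- sumR_scal. apply sumR_ext; intros; ring.
Qed.

Definition saddle m n (M : nat -> nat -> R) (v : R) (x y : nat -> R) : Prop :=
  simplex m x /\ simplex n y /\
  (forall j, (j < n)%nat -> v <= sumR m (fun i => x i * M i j)) /\
  (forall i, (i < m)%nat -> sumR n (fun j => y j * M i j) <= v).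

Lemma saddle_IsVal m n M v x y : saddle m n M v x y -> IsVal m n M v.
Proof.
  intros (Hx & Hy & Hcol & Hrow). split.
  - exists x. split; [assumption|]. split.
    + exists y. split; [assumption|]. apply Rle_antisym.
      * rewrite payoff_rows. apply simplex_avg_le; auto.
      * rewrite payoff_cols. apply simplex_avg_ge; auto.
    + intros y' Hy'. rewrite payoff_cols. apply simplex_avg_ge; auto.
  - intros x' w Hx' [_ Hw]. apply Rle_trans with (payoff m n M x' y); [auto|].
    rewrite payoff_rows. apply simplex_avg_le; auto.
Qed.

Lemma argmin_index n (f : nat -> R) : (1 <= n)%nat ->
  exists j0, (j0 < n)%nat /\ forall j, (j < n)%nat -> f j0 <= f j.
Proof.
  induction n as [|n IH]; intros Hn; [lia|]. destruct (Nat.eq_dec n 0) as [->|Hne].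
  - exists 0%nat. split; [lia|]. intros j Hj. replace j with 0%nat by lia. lra.
  - destruct IH as [j0 [Hj0 H]]; [lia|]. destruct (Rle_dec (f j0) (f n)).
    + exists j0. split; [lia|]. intros j Hj.
      destruct (Nat.eq_dec j n) as [->|]; [assumption|apply H; lia].
    + exists n. split; [lia|]. intros j Hj.
      destruct (Nat.eq_dec j n) as [->|]; [lra|]. specialize (H j ltac:(lia)). lra.
Qed.

Lemma IsVal_column_le m n M v x : (1 <= n)%nat -> IsVal m n M v -> simplex m x ->
  exists j, (j < n)%nat /\ sumR m (fun i => x i * M i j) <= v.
Proof.
  intros Hn [_ Hmax] Hx. set (a := fun j => sumR m (fun i => x i * M i j)).
  destruct (argmin_index n a Hn) as [j0 [Hj0 Hmin]].
  exists j0. split; [assumption|].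
  apply Rle_trans with (payoff m n M x (unit_vec j0)).
  - rewrite payoff_cols, sumR_unit_vec by assumption. lra.
  - apply (Hmax x); [assumption|]. split.
    + exists (unit_vec j0). split; [apply simplex_unit_vec; assumption|reflexivity].
    + intros y Hy. rewrite !payoff_cols, sumR_unit_vec by assumption.
      apply simplex_avg_ge; assumption.
Qed.

(** * A theorem of the alternative (Gordan-Ville), by Fourier-Motzkin elimination *)

(* A finite family of vectors of R^m is given as a list [cols]; a nonnegative
   combination of them is a list of (weight, vector) pairs. *)
Definition combination (ys : list (R * (nat -> R))) (i : nat) : R :=
  fold_right (fun wc acc => fst wc * snd wc i + acc) 0 ys.

Definition positive_dual (m : nat) (cols : list (nat -> R)) : Prop :=
  exists x : nat -> R, (forall i, (i < m)%nat -> 0 <= x i) /\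
    forall c, In c cols -> 0 < sumR m (fun i => x i * c i).

Definition nonpositive_combination (m : nat) (cols : list (nat -> R)) : Prop :=
  exists ys : list (R * (nat -> R)),
    (forall wc, In wc ys -> 0 <= fst wc /\ In (snd wc) cols) /\
    (exists wc, In wc ys /\ 0 < fst wc) /\
    (forall i, (i < m)%nat -> combination ys i <= 0).

Definition nonpos_at (m : nat) (c : nat -> R) : bool := if Rle_dec (c m) 0 then true else false.
Definition pos_at (m : nat) (c : nat -> R) : bool := if Rlt_dec 0 (c m) then true else false.
Definition neg_at (m : nat) (c : nat -> R) : bool := if Rlt_dec (c m) 0 then true else false.

Lemma in_nonpos_at m c cols : In c (filter (nonpos_at m) cols) <-> In c cols /\ c m <= 0.
Proof. rewrite filter_In. unfold nonpos_at. destruct (Rle_dec (c m) 0); intuition congruence. Qed.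

Lemma in_pos_at m c cols : In c (filter (pos_at m) cols) <-> In c cols /\ 0 < c m.
Proof. rewrite filter_In. unfold pos_at. destruct (Rlt_dec 0 (c m)); intuition congruence. Qed.

Lemma in_neg_at m c cols : In c (filter (neg_at m) cols) <-> In c cols /\ c m < 0.
Proof. rewrite filter_In. unfold neg_at. destruct (Rlt_dec (c m) 0); intuition congruence. Qed.

(* The combination of cj (with cj m > 0) and cl (with cl m < 0) cancelling coordinate m. *)
Definition fm_pair (m : nat) (cj cl : nat -> R) : nat -> R :=
  fun i => - cl m * cj i + cj m * cl i.

Definition fm_eliminate (m : nat) (cols : list (nat -> R)) : list (nat -> R) :=
  filter (nonpos_at m) cols ++
  flat_map (fun cj => map (fm_pair m cj) (filter (neg_at m) cols)) (filter (pos_at m) cols).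

Lemma in_fm_eliminate m cols b : In b (fm_eliminate m cols) ->
  (In b cols /\ b m <= 0) \/
  exists cj cl, In cj cols /\ 0 < cj m /\ In cl cols /\ cl m < 0 /\ b = fm_pair m cj cl.
Proof.
  unfold fm_eliminate. intros H. apply in_app_or in H. destruct H as [H|H].
  - left. apply in_nonpos_at; assumption.
  - right. apply in_flat_map in H. destruct H as [cj [Hj H]]. apply in_map_iff in H.
    destruct H as [cl [<- Hl]]. apply in_pos_at in Hj. apply in_neg_at in Hl.
    exists cj, cl. tauto.
Qed.

Lemma fm_pair_in m cols cj cl : In cj cols -> 0 < cj m -> In cl cols -> cl m < 0 ->
  In (fm_pair m cj cl) (fm_eliminate m cols).
Proof.
  intros. unfold fm_eliminate. apply in_or_app; right. apply in_flat_map.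
  exists cj. split; [apply in_pos_at; auto|]. apply in_map, in_neg_at; auto.
Qed.

Lemma fm_threshold m cols (s : (nat -> R) -> R) :
  (forall c, In c cols -> c m <= 0 -> 0 < s c) ->
  (forall cj cl, In cj cols -> 0 < cj m -> In cl cols -> cl m < 0 ->
     0 < - cl m * s cj + cj m * s cl) ->
  exists t, 0 < t /\ forall c, In c cols -> 0 < s c + t * c m.
Proof.
  intros Hnonpos Hpair.
  set (lows := map (fun c => - s c / c m) (filter (pos_at m) cols)).
  set (highs := map (fun c => s c / - c m) (filter (neg_at m) cols)).
  assert (Hsep : forall a b, In a (0 :: lows) -> In b highs -> a < b).
  { intros a b Ha Hb. apply in_map_iff in Hb. destruct Hb as [cl [<- Hl]].
    apply in_neg_at in Hl. destruct Hl as [Hl Hlm].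
    assert (0 < s cl) by (apply Hnonpos; [assumption|lra]).
    destruct Ha as [<-|Ha]; [apply Rdiv_lt_0_compat; lra|].
    apply in_map_iff in Ha. destruct Ha as [cj [<- Hj]]. apply in_pos_at in Hj.
    destruct Hj as [Hj Hjm]. specialize (Hpair cj cl Hj Hjm Hl Hlm).
    apply (Rmult_lt_reg_r (cj m * - cl m)); [nra|].
    replace (- s cj / cj m * (cj m * - cl m)) with (- s cj * - cl m) by (field; lra).
    replace (s cl / - cl m * (cj m * - cl m)) with (s cl * cj m) by (field; lra). nra. }
  set (lo := MaxRlist (0 :: lows)).
  assert (Hlo : In lo (0 :: lows)) by (apply MaxRlist_P2; exists 0; left; reflexivity).
  assert (Hlo0 : 0 <= lo) by (apply MaxRlist_P1; left; reflexivity).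
  set (gap := MinRlist (map (fun b => b - lo) highs)).
  assert (Hgap : 0 < gap).
  { apply MinRlist_P2. intros y Hy. apply in_map_iff in Hy. destruct Hy as [b [<- Hb]].
    specialize (Hsep lo b Hlo Hb). lra. }
  exists (lo + gap / 2). split; [lra|]. intros c Hc.
  destruct (Rtotal_order (c m) 0) as [Hneg|[Hzero|Hpos]].
  - assert (gap <= s c / - c m - lo).
    { apply MinRlist_P1, (in_map (fun b => b - lo)), (in_map (fun c => s c / - c m)).
      apply in_neg_at; auto. }
    assert (s c = s c / - c m * - c m) by (field; lra). nra.
  - rewrite Hzero, Rmult_0_r, Rplus_0_r. apply Hnonpos; [assumption|lra].
  - assert (- s c / c m <= lo).
    { apply MaxRlist_P1. right. apply (in_map (fun c => - s c / c m)), in_pos_at; auto. }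
    assert (- s c = - s c / c m * c m) by (field; lra). nra.
Qed.

Lemma sumR_extend_last m (x : nat -> R) t c :
  sumR (S m) (fun i => (if Nat.eqb i m then t else x i) * c i) =
  sumR m (fun i => x i * c i) + t * c m.
Proof.
  simpl. rewrite Nat.eqb_refl. f_equal. apply sumR_ext. intros i Hi.
  destruct (Nat.eqb_spec i m); [lia|reflexivity].
Qed.

Lemma fm_dual_lift m cols : positive_dual m (fm_eliminate m cols) -> positive_dual (S m) cols.
Proof.
  intros [x [Hx Hpos]]. set (s := fun c : nat -> R => sumR m (fun i => x i * c i)).
  destruct (fm_threshold m cols s) as [t [Ht Hst]].
  - intros c Hc Hcm. apply Hpos. apply in_or_app; left. apply in_nonpos_at; auto.
  - intros cj cl Hj Hjm Hl Hlm.
    pose proof (Hpos _ (fm_pair_in m cols cj cl Hj Hjm Hl Hlm)) as Hp.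
    unfold s. rewrite <- !sumR_scal, <- sumR_plus.
    erewrite sumR_ext; [exact Hp|]. intros i _. unfold fm_pair. ring.
  - exists (fun i => if Nat.eqb i m then t else x i). split.
    + intros i Hi. destruct (Nat.eqb_spec i m); [lra|apply Hx; lia].
    + intros c Hc. rewrite sumR_extend_last. apply Hst; assumption.
Qed.

Lemma fm_combination_lift m cols ys' :
  (forall wc, In wc ys' -> 0 <= fst wc /\ In (snd wc) (fm_eliminate m cols)) ->
  exists ys, (forall wc, In wc ys -> 0 <= fst wc /\ In (snd wc) cols) /\
    ((exists wc, In wc ys' /\ 0 < fst wc) -> exists wc, In wc ys /\ 0 < fst wc) /\
    (forall i, combination ys i = combination ys' i) /\ combination ys m <= 0.
Proof.
  induction ys' as [|[w b] ys' IH]; intros H.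
  - exists nil. simpl. repeat split; try lra; intros; firstorder.
  - destruct IH as [ys (Hys & Hwt & Heq & Hm)]; [intros; apply H; right; assumption|].
    destruct (H (w, b) (or_introl eq_refl)) as [Hw Hb]. simpl in Hw, Hb.
    apply in_fm_eliminate in Hb.
    destruct Hb as [[Hb Hbm] | (cj & cl & Hj & Hjm & Hl & Hlm & ->)].
    + exists ((w, b) :: ys). unfold combination in *; simpl. split; [|split; [|split]].
      * intros wc [<-|Hwc]; [auto|apply Hys; assumption].
      * intros [wc [[<-|Hwc] Hp]]; [exists (w, b); simpl; auto|].
        destruct Hwt as [wc' ?]; [exists wc; auto|]. exists wc'; tauto.
      * intros i. rewrite Heq. reflexivity.
      * assert (w * b m <= 0) by nra. lra.
    + exists ((w * - cl m, cj) :: (w * cj m, cl) :: ys). unfold combination in *; simpl.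
      split; [|split; [|split]].
      * intros wc [<-|[<-|Hwc]]; simpl; [split; auto; nra|split; auto; nra|auto].
      * intros [wc [[<-|Hwc] Hp]]; [exists (w * - cl m, cj); simpl in *; split; auto; nra|].
        destruct Hwt as [wc' ?]; [exists wc; auto|]. exists wc'; tauto.
      * intros i. rewrite Heq. unfold fm_pair. ring.
      * assert (w * - cl m * cj m + (w * cj m * cl m) = 0) by ring. lra.
Qed.

Lemma fm_nonpositive_lift m cols :
  nonpositive_combination m (fm_eliminate m cols) -> nonpositive_combination (S m) cols.
Proof.
  intros [ys' (Hys' & Hwt & Hle)].
  destruct (fm_combination_lift m cols ys' Hys') as [ys (Hys & Hwt' & Heq & Hm)].
  exists ys. split; [assumption|]. split; [auto|].
  intros i Hi. destruct (Nat.eq_dec i m) as [->|Hne]; [assumption|].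
  rewrite Heq. apply Hle. lia.
Qed.

Theorem gordan_alternative m : forall cols, positive_dual m cols \/ nonpositive_combination m cols.
Proof.
  induction m as [|m IH]; intros cols.
  - destruct cols as [|c cols].
    + left. exists (fun _ => 0). split; [intros; lra|intros c []].
    + right. exists ((1, c) :: nil). split; [|split].
      * intros wc [<-|[]]; simpl; split; [lra|left; reflexivity].
      * exists (1, c). split; [left; reflexivity|simpl; lra].
      * intros i Hi; lia.
  - destruct (IH (fm_eliminate m cols)) as [Hd|Hc].
    + left. apply fm_dual_lift; assumption.
    + right. apply fm_nonpositive_lift; assumption.
Qed.

(** * The minimax theorem: every value is the value of a saddle point *)

Lemma combination_weights n (col : nat -> nat -> R) ys :
  (forall wc, In wc ys -> 0 <= fst wc /\ In (snd wc) (map col (seq 0 n))) ->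
  exists y : nat -> R, (forall j, 0 <= y j) /\
    (forall i, combination ys i = sumR n (fun j => y j * col j i)) /\
    (forall wc, In wc ys -> fst wc <= sumR n y).
Proof.
  induction ys as [|[w c] ys IH]; intros H.
  - exists (fun _ => 0). split; [intros; lra|]. split; [|intros _ []].
    intros i. simpl. rewrite (sumR_ext _ _ (fun _ => 0)) by (intros; ring).
    rewrite sumR_zero. reflexivity.
  - destruct IH as [y (Hy & Hcomb & Hmass)]; [intros; apply H; right; assumption|].
    destruct (H (w, c) (or_introl eq_refl)) as [Hw Hc]; simpl in Hw, Hc.
    apply in_map_iff in Hc. destruct Hc as [j0 [<- Hj0]]. apply in_seq in Hj0.
    assert (Hy0 : 0 <= sumR n y) by (apply sumR_nonneg; auto).
    assert (Hmass1 : sumR n (fun j => y j + w * unit_vec j0 j) = sumR n y + w).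
    { rewrite sumR_plus,
        (sumR_ext n (fun j => w * unit_vec j0 j) (fun j => w * (unit_vec j0 j * 1)))
        by (intros; ring).
      rewrite sumR_scal, sumR_unit_vec by lia. ring. }
    exists (fun j => y j + w * unit_vec j0 j). split; [|split].
    + intros j. unfold unit_vec. specialize (Hy j). destruct (Nat.eqb j j0); nra.
    + intros i. unfold combination in *; simpl. rewrite Hcomb.
      rewrite (sumR_ext n (fun j => (y j + w * unit_vec j0 j) * col j i)
                 (fun j => y j * col j i + w * (unit_vec j0 j * col j i)))
        by (intros; ring).
      rewrite sumR_plus, sumR_scal, sumR_unit_vec by lia. ring.
    + rewrite Hmass1. intros wc [<-|Hwc]; simpl; [lra|].
      specialize (Hmass wc Hwc). lra.
Qed.

Section Minimax.
Variables (m n : nat) (M : nat -> nat -> R) (v : R).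
Hypotheses (Hn : (1 <= n)%nat) (Hval : IsVal m n M v).

Let shifted_cols : list (nat -> R) := map (fun j i => M i j - v) (seq 0 n).

Lemma value_no_positive_dual : ~ positive_dual m shifted_cols.
Proof.
  intros [x [Hx Hpos]].
  assert (Hcol : forall j, (j < n)%nat -> 0 < sumR m (fun i => x i * (M i j - v))).
  { intros j Hj. apply Hpos. apply (in_map (fun j i => M i j - v)), in_seq. lia. }
  set (s := sumR m x).
  assert (Hs : 0 < s).
  { destruct (Rle_lt_or_eq_dec 0 s) as [|Hs0]; [apply sumR_nonneg; auto|assumption|].
    specialize (Hcol 0%nat ltac:(lia)).
    rewrite (sumR_ext _ _ (fun _ => 0)), sumR_zero in Hcol; [lra|].
    intros i Hi. rewrite (sumR_nonneg_eq0 m x Hx (eq_sym Hs0) i Hi). ring. }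
  destruct (IsVal_column_le m n M v (fun i => x i / s) Hn Hval) as [j [Hj Hle]].
  { apply simplex_normalize; assumption. }
  specialize (Hcol j Hj).
  rewrite (sumR_ext _ _ (fun i => x i * M i j + - v * x i)), sumR_plus, sumR_scal in Hcol
    by (intros; ring).
  unfold Rdiv in Hle. rewrite (sumR_ext _ _ (fun i => / s * (x i * M i j))), sumR_scal in Hle
    by (intros; ring).
  apply (Rmult_le_compat_l s) in Hle; [|lra].
  rewrite <- Rmult_assoc, Rinv_r, Rmult_1_l in Hle by lra. fold s in Hcol. lra.
Qed.

Lemma value_column_strategy :
  exists y, simplex n y /\ forall i, (i < m)%nat -> sumR n (fun j => y j * M i j) <= v.
Proof.
  destruct (gordan_alternative m shifted_cols) as [Hd|[ys (Hys & [wc [Hwc Hwpos]] & Hle)]].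
  - exfalso. apply value_no_positive_dual; assumption.
  - destruct (combination_weights n (fun j i => M i j - v) ys Hys) as [y (Hy & Hcomb & Hmass)].
    assert (Hs : 0 < sumR n y) by (specialize (Hmass wc Hwc); lra).
    exists (fun j => y j / sumR n y). split; [apply simplex_normalize; auto|].
    intros i Hi. specialize (Hle i Hi). rewrite Hcomb in Hle.
    rewrite (sumR_ext _ _ (fun j => y j * M i j + - v * y j)), sumR_plus, sumR_scal in Hle
      by (intros; ring).
    unfold Rdiv. rewrite (sumR_ext _ _ (fun j => / sumR n y * (y j * M i j))), sumR_scal
      by (intros; ring).
    apply (Rmult_le_reg_l (sumR n y)); [assumption|].
    rewrite <- Rmult_assoc, Rinv_r, Rmult_1_l by lra. lra.
Qed.

Theorem IsVal_saddle : exists x y, saddle m n M v x y.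
Proof.
  destruct value_column_strategy as [y [Hy Hrow]].
  destruct Hval as [[x [Hx [_ Hmin]]] _].
  exists x, y. split; [|split; [|split]]; try assumption.
  intros j Hj. specialize (Hmin (unit_vec j) (simplex_unit_vec n j Hj)).
  rewrite payoff_cols, sumR_unit_vec in Hmin; assumption.
Qed.

End Minimax.

(** * Operations on games and their saddle points *)

(* Pairs (a, b) with a < p are encoded as the single index a + p * b. *)
Lemma mod_pair p a b : (a < p)%nat -> ((a + p * b) mod p = a)%nat.
Proof. intros H. rewrite Nat.mul_comm, Nat.Div0.mod_add. apply Nat.mod_small; assumption. Qed.

Lemma div_pair p a b : (a < p)%nat -> ((a + p * b) / p = b)%nat.
Proof. intros H. rewrite Nat.mul_comm, Nat.div_add by lia. rewrite Nat.div_small; auto. Qed.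

Lemma mod_lt p j : (1 <= p)%nat -> (j mod p < p)%nat.
Proof. intros; apply Nat.mod_upper_bound; lia. Qed.

Lemma div_lt p q j : (1 <= p)%nat -> (j < p * q)%nat -> (j / p < q)%nat.
Proof. intros; apply Nat.Div0.div_lt_upper_bound; lia. Qed.

Definition prod_strategy (p : nat) (u v : nat -> R) : nat -> R :=
  fun j => u (j mod p)%nat * v (j / p)%nat.

Lemma sumR_prod_strategy p q u v F : (1 <= p)%nat ->
  sumR (p * q) (fun j => prod_strategy p u v j * F (j mod p)%nat (j / p)%nat) =
  sumR q (fun b => sumR p (fun a => u a * v b * F a b)).
Proof.
  intros Hp. rewrite sumR_blocks. apply sumR_ext; intros b Hb. apply sumR_ext; intros a Ha.
  unfold prod_strategy. rewrite mod_pair, div_pair by assumption. ring.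
Qed.

Lemma prod_strategy_marginal_l p q u v F : (1 <= p)%nat -> sumR q v = 1 ->
  sumR (p * q) (fun j => prod_strategy p u v j * F (j mod p)%nat) = sumR p (fun a => u a * F a).
Proof.
  intros Hp Hv. rewrite (sumR_prod_strategy p q u v (fun a _ => F a)) by assumption.
  rewrite sumR_swap. apply sumR_ext; intros a Ha.
  rewrite (sumR_ext _ _ (fun b => (u a * F a) * v b)) by (intros; ring).
  rewrite sumR_scal, Hv. ring.
Qed.

Lemma prod_strategy_marginal_r p q u v F : (1 <= p)%nat -> sumR p u = 1 ->
  sumR (p * q) (fun j => prod_strategy p u v j * F (j / p)%nat) = sumR q (fun b => v b * F b).
Proof.
  intros Hp Hu. rewrite (sumR_prod_strategy p q u v (fun _ b => F b)) by assumption.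
  apply sumR_ext; intros b Hb.
  rewrite (sumR_ext _ _ (fun a => (v b * F b) * u a)) by (intros; ring).
  rewrite sumR_scal, Hu. ring.
Qed.

Lemma prod_strategy_mix p q u v lam F G : simplex p u -> simplex q v ->
  sumR (p * q) (fun j => prod_strategy p u v j *
                         (lam * F (j mod p)%nat + (1 - lam) * G (j / p)%nat)) =
  lam * sumR p (fun a => u a * F a) + (1 - lam) * sumR q (fun b => v b * G b).
Proof.
  intros Su Sv. pose proof (simplex_dim_pos _ _ Su).
  rewrite (sumR_ext _ _ (fun j => lam * (prod_strategy p u v j * F (j mod p)%nat) +
                                  (1 - lam) * (prod_strategy p u v j * G (j / p)%nat)))
    by (intros; ring).
  rewrite sumR_plus, !sumR_scal, prod_strategy_marginal_l, prod_strategy_marginal_r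
    by (apply Su || apply Sv || assumption).
  reflexivity.
Qed.

Lemma simplex_prod_strategy p q u v :
  simplex p u -> simplex q v -> simplex (p * q) (prod_strategy p u v).
Proof.
  intros Su Sv. pose proof (simplex_dim_pos _ _ Su). split.
  - intros j Hj. unfold prod_strategy. apply Rmult_le_pos; [apply Su|apply Sv].
    + apply mod_lt; assumption.
    + apply div_lt; assumption.
  - pose proof (prod_strategy_marginal_l p q u v (fun _ => 1) ltac:(assumption) (proj2 Sv))
      as Hmass; cbv beta in Hmass.
    rewrite (sumR_ext _ _ (fun j => prod_strategy p u v j * 1)) by (intros; ring).
    rewrite Hmass, (sumR_ext _ _ u) by (intros; ring). apply Su.
Qed.

Definition embed_left (mA : nat) (x : nat -> R) : nat -> R :=
  fun i => if Nat.ltb i mA then x i else 0.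
Definition embed_right (mA : nat) (x : nat -> R) : nat -> R :=
  fun i => if Nat.ltb i mA then 0 else x (i - mA)%nat.

Lemma sumR_embed_left mA mB x F :
  sumR (mA + mB) (fun i => embed_left mA x i * F i) = sumR mA (fun i => x i * F i).
Proof.
  rewrite sumR_split, (sumR_ext mB _ (fun _ => 0)), sumR_zero, Rplus_0_r.
  - apply sumR_ext. intros i Hi. unfold embed_left. destruct (Nat.ltb_spec i mA); [reflexivity|lia].
  - intros i Hi. unfold embed_left. destruct (Nat.ltb_spec (mA + i) mA); [lia|ring].
Qed.

Lemma sumR_embed_right mA mB x F :
  sumR (mA + mB) (fun i => embed_right mA x i * F i) = sumR mB (fun i => x i * F (mA + i)%nat).
Proof.
  rewrite sumR_split, (sumR_ext mA _ (fun _ => 0)), sumR_zero, Rplus_0_l.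
  - apply sumR_ext. intros i Hi. unfold embed_right.
    destruct (Nat.ltb_spec (mA + i) mA); [lia|]. do 2 f_equal. lia.
  - intros i Hi. unfold embed_right. destruct (Nat.ltb_spec i mA); [ring|lia].
Qed.

Lemma simplex_embed_left mA mB x : simplex mA x -> simplex (mA + mB) (embed_left mA x).
Proof.
  intros [H S]. split.
  - intros i Hi. unfold embed_left. destruct (Nat.ltb_spec i mA); [apply H; auto|lra].
  - rewrite (sumR_ext _ _ (fun i => embed_left mA x i * 1)), sumR_embed_left by (intros; ring).
    rewrite (sumR_ext _ _ x) by (intros; ring). exact S.
Qed.

Lemma simplex_embed_right mA mB x : simplex mB x -> simplex (mA + mB) (embed_right mA x).
Proof.
  intros [H S]. split.
  - intros i Hi. unfold embed_right. destruct (Nat.ltb_spec i mA); [lra|apply H; lia].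
  - rewrite (sumR_ext _ _ (fun i => embed_right mA x i * 1)), sumR_embed_right by (intros; ring).
    rewrite (sumR_ext _ _ x) by (intros; ring). exact S.
Qed.

Definition neg_transpose (M : nat -> nat -> R) : nat -> nat -> R := fun i j => - M j i.

Lemma saddle_neg_transpose m n M v x y :
  saddle m n M v x y -> saddle n m (neg_transpose M) (- v) y x.
Proof.
  intros (Sx & Sy & Hcol & Hrow). split; [assumption|split; [assumption|split]].
  - intros i Hi. unfold neg_transpose.
    rewrite (sumR_ext _ _ (fun j => - (y j * M i j))), sumR_opp by (intros; ring).
    specialize (Hrow i Hi). lra.
  - intros j Hj. unfold neg_transpose.
    rewrite (sumR_ext _ _ (fun i => - (x i * M i j))), sumR_opp by (intros; ring).
    specialize (Hcol j Hj). lra.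
Qed.

(* The row player first picks one of the games A, B (rows of A, then rows of B);
   the column player answers in both games at once with a pair of columns. *)
Definition max_game (mA nA : nat) (A B : nat -> nat -> R) : nat -> nat -> R :=
  fun i j => if Nat.ltb i mA then A i (j mod nA)%nat else B (i - mA)%nat (j / nA)%nat.

Lemma saddle_max mA nA mB nB A B a b xA yA xB yB :
  saddle mA nA A a xA yA -> saddle mB nB B b xB yB ->
  exists x y, saddle (mA + mB) (nA * nB) (max_game mA nA A B) (Rmax a b) x y.
Proof.
  intros (SxA & SyA & HcA & HrA) (SxB & SyB & HcB & HrB).
  pose proof (simplex_dim_pos _ _ SyA) as HnA.
  assert (Hrows : forall i, (i < mA + mB)%nat ->
    sumR (nA * nB) (fun j => prod_strategy nA yA yB j * max_game mA nA A B i j) <= Rmax a b).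
  { intros i Hi. unfold max_game. destruct (Nat.ltb_spec i mA) as [HiA|HiA].
    - rewrite (prod_strategy_marginal_l nA nB yA yB (fun ja => A i ja)) by (apply SyB || auto).
      specialize (HrA i HiA). pose proof (Rmax_l a b). lra.
    - rewrite (prod_strategy_marginal_r nA nB yA yB (fun jb => B (i - mA)%nat jb))
        by (apply SyA || auto).
      specialize (HrB (i - mA)%nat ltac:(lia)). pose proof (Rmax_r a b). lra. }
  destruct (Rle_dec b a).
  - exists (embed_left mA xA), (prod_strategy nA yA yB).
    split; [apply simplex_embed_left; assumption|].
    split; [apply simplex_prod_strategy; assumption|]. split; [|assumption].
    intros j Hj. rewrite Rmax_left, sumR_embed_left by lra.
    rewrite (sumR_ext _ _ (fun i => xA i * A i (j mod nA)%nat)).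
    + apply HcA, mod_lt; assumption.
    + intros i Hi. unfold max_game. destruct (Nat.ltb_spec i mA); [reflexivity|lia].
  - exists (embed_right mA xB), (prod_strategy nA yA yB).
    split; [apply simplex_embed_right; assumption|].
    split; [apply simplex_prod_strategy; assumption|]. split; [|assumption].
    intros j Hj. rewrite Rmax_right, sumR_embed_right by lra.
    rewrite (sumR_ext _ _ (fun i => xB i * B i (j / nA)%nat)).
    + apply HcB, div_lt; assumption.
    + intros i Hi. unfold max_game. destruct (Nat.ltb_spec (mA + i) mA); [lia|].
      do 3 f_equal. lia.
Qed.

(* Both players play both games independently; payoffs are averaged with weight lam. *)
Definition mix_game (lam : R) (mA nA : nat) (A B : nat -> nat -> R) : nat -> nat -> R :=
  fun i j => lam * A (i mod mA)%nat (j mod nA)%nat + (1 - lam) * B (i / mA)%nat (j / nA)%nat.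

Lemma saddle_mix lam mA nA mB nB A B a b xA yA xB yB : 0 <= lam <= 1 ->
  saddle mA nA A a xA yA -> saddle mB nB B b xB yB ->
  saddle (mA * mB) (nA * nB) (mix_game lam mA nA A B) (lam * a + (1 - lam) * b)
    (prod_strategy mA xA xB) (prod_strategy nA yA yB).
Proof.
  intros Hl (SxA & SyA & HcA & HrA) (SxB & SyB & HcB & HrB).
  pose proof (simplex_dim_pos _ _ SxA). pose proof (simplex_dim_pos _ _ SyA).
  split; [apply simplex_prod_strategy; assumption|].
  split; [apply simplex_prod_strategy; assumption|]. split.
  - intros j Hj. unfold mix_game.
    rewrite (prod_strategy_mix mA mB xA xB lam (fun a => A a (j mod nA)%nat)
                               (fun b => B b (j / nA)%nat)) by assumption.
    assert (a <= sumR mA (fun i => xA i * A i (j mod nA)%nat)) by (apply HcA, mod_lt; auto).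
    assert (b <= sumR mB (fun i => xB i * B i (j / nA)%nat)) by (apply HcB, div_lt; auto).
    nra.
  - intros i Hi. unfold mix_game.
    rewrite (prod_strategy_mix nA nB yA yB lam (fun c => A (i mod mA)%nat c)
                               (fun c => B (i / mA)%nat c)) by assumption.
    assert (sumR nA (fun j => yA j * A (i mod mA)%nat j) <= a) by (apply HrA, mod_lt; auto).
    assert (sumR nB (fun j => yB j * B (i / mA)%nat j) <= b) by (apply HrB, div_lt; auto).
    nra.
Qed.

(** * Closure properties of D_0 *)

Definition game_at (k : nat) (G : nat -> nat -> nat -> R) (p : nat -> R) : nat -> nat -> R :=
  fun i j => sumR k (fun l => p l * G l i j).

Definition bounded_family (k m n : nat) (G : nat -> nat -> nat -> R) : Prop :=
  forall l i j, (l < k)%nat -> (i < m)%nat -> (j < n)%nat -> -1 <= G l i j <= 1.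

(* By the minimax theorem, f is in D_0 iff it is the saddle value of some
   bounded family of games. *)
Lemma D0_intro k f m n G : (1 <= m)%nat -> (1 <= n)%nat -> bounded_family k m n G ->
  (forall p, simplex k p -> exists x y, saddle m n (game_at k G p) (f p) x y) -> D0 k f.
Proof.
  intros Hm Hn HG Hs. exists m, n, G.
  split; [|split; [|split]]; try assumption.
  intros p Sp. destruct (Hs p Sp) as [x [y S]]. exact (saddle_IsVal _ _ _ _ _ _ S).
Qed.

Lemma D0_elim k f : D0 k f -> exists m n G,
  (1 <= m)%nat /\ (1 <= n)%nat /\ bounded_family k m n G /\
  forall p, simplex k p -> exists x y, saddle m n (game_at k G p) (f p) x y.
Proof.
  intros (m & n & G & Hm & Hn & HG & Hv). exists m, n, G.
  split; [|split; [|split]]; try assumption.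
  intros p Sp. exact (IsVal_saddle m n _ _ Hn (Hv p Sp)).
Qed.

Lemma D0_ext k f f' : D0 k f -> (forall p, simplex k p -> f p = f' p) -> D0 k f'.
Proof.
  intros (m & n & G & Hm & Hn & HG & Hv) E. exists m, n, G.
  split; [|split; [|split]]; try assumption.
  intros p Sp. rewrite <- E by assumption. auto.
Qed.

Lemma game_at_neg_transpose k G p :
  game_at k (fun l => neg_transpose (G l)) p = neg_transpose (game_at k G p).
Proof.
  extensionality i; extensionality j. unfold game_at, neg_transpose.
  rewrite <- sumR_opp. apply sumR_ext; intros; ring.
Qed.

Lemma game_at_max k mA nA GA GB p :
  game_at k (fun l => max_game mA nA (GA l) (GB l)) p =
  max_game mA nA (game_at k GA p) (game_at k GB p).
Proof.
  extensionality i; extensionality j. unfold game_at, max_game.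
  destruct (Nat.ltb i mA); reflexivity.
Qed.

Lemma game_at_mix k lam mA nA GA GB p :
  game_at k (fun l => mix_game lam mA nA (GA l) (GB l)) p =
  mix_game lam mA nA (game_at k GA p) (game_at k GB p).
Proof.
  extensionality i; extensionality j. unfold game_at, mix_game.
  rewrite <- !sumR_scal, <- sumR_plus. apply sumR_ext; intros; ring.
Qed.

(* Negation: exchange the players. *)
Lemma D0_neg k f : D0 k f -> D0 k (fun p => - f p).
Proof.
  intros (m & n & G & Hm & Hn & HG & Hs)%D0_elim.
  apply (D0_intro k _ n m (fun l => neg_transpose (G l))); try assumption.
  - intros l i j Hl Hi Hj. unfold neg_transpose.
    specialize (HG l j i Hl Hj Hi). lra.
  - intros p Sp. destruct (Hs p Sp) as [x [y S]]. exists y, x.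
    rewrite game_at_neg_transpose. apply saddle_neg_transpose; assumption.
Qed.

(* Maximum: the row player chooses the game. *)
Lemma D0_max k f g : D0 k f -> D0 k g -> D0 k (fun p => Rmax (f p) (g p)).
Proof.
  intros (mA & nA & GA & HmA & HnA & HGA & HsA)%D0_elim
         (mB & nB & GB & HmB & HnB & HGB & HsB)%D0_elim.
  apply (D0_intro k _ (mA + mB) (nA * nB) (fun l => max_game mA nA (GA l) (GB l))); try lia.
  - intros l i j Hl Hi Hj. unfold max_game. destruct (Nat.ltb_spec i mA).
    + apply HGA; [assumption..|apply mod_lt; assumption].
    + apply HGB; [assumption|lia|apply div_lt; assumption].
  - intros p Sp. destruct (HsA p Sp) as [xA [yA SA]], (HsB p Sp) as [xB [yB SB]].
    rewrite game_at_max. exact (saddle_max _ _ _ _ _ _ _ _ _ _ _ _ SA SB).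
Qed.

(* Minimum: min f g = - max (-f) (-g). *)
Lemma D0_min k f g : D0 k f -> D0 k g -> D0 k (fun p => Rmin (f p) (g p)).
Proof.
  intros Hf Hg.
  apply D0_ext with (fun p => - Rmax (- f p) (- g p)).
  - apply D0_neg, D0_max; apply D0_neg; assumption.
  - intros p _. unfold Rmax, Rmin.
    destruct (Rle_dec (- f p) (- g p)), (Rle_dec (f p) (g p)); lra.
Qed.

(* Convex combination: play both games independently. *)
Lemma D0_conv k f g lam : 0 <= lam <= 1 -> D0 k f -> D0 k g ->
  D0 k (fun p => lam * f p + (1 - lam) * g p).
Proof.
  intros Hl (mA & nA & GA & HmA & HnA & HGA & HsA)%D0_elim
            (mB & nB & GB & HmB & HnB & HGB & HsB)%D0_elim.
  apply (D0_intro k _ (mA * mB) (nA * nB) (fun l => mix_game lam mA nA (GA l) (GB l)));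
    try lia.
  - intros l i j Hl' Hi Hj. unfold mix_game.
    assert (-1 <= GA l (i mod mA)%nat (j mod nA)%nat <= 1)
      by (apply HGA; [assumption|apply mod_lt..]; assumption).
    assert (-1 <= GB l (i / mA)%nat (j / nA)%nat <= 1)
      by (apply HGB; [assumption|apply div_lt..]; assumption).
    nra.
  - intros p Sp. destruct (HsA p Sp) as [xA [yA SA]], (HsB p Sp) as [xB [yB SB]].
    rewrite game_at_mix. do 2 eexists. exact (saddle_mix lam _ _ _ _ _ _ _ _ _ _ _ _ Hl SA SB).
Qed.

(* Linear functions with coefficients in [-1,1] are values of 1x1 games. *)
Lemma D0_linear k (al : nat -> R) : (forall l, (l < k)%nat -> -1 <= al l <= 1) ->
  D0 k (fun p => sumR k (fun l => p l * al l)).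
Proof.
  intros H. apply (D0_intro k _ 1 1 (fun l _ _ => al l)); try lia.
  - intros l i j Hl _ _. apply H; assumption.
  - intros p Sp. exists (unit_vec 0), (unit_vec 0).
    split; [apply simplex_unit_vec; lia|split; [apply simplex_unit_vec; lia|]].
    unfold game_at, unit_vec. simpl. split; intros; lra.
Qed.

(** * Compactness of the simplex *)

(* Transfer between vectors nat -> R and the k-tuples used by Coquelicot's
   compactness theorem for boxes. *)
Fixpoint to_tuple (n : nat) (p : nat -> R) : Compactness.Tn n R :=
  match n return Compactness.Tn n R with
  | O => tt
  | S n' => (p O, to_tuple n' (fun i => p (S i)))
  end.

Fixpoint of_tuple (n : nat) : Compactness.Tn n R -> nat -> R :=
  match n return Compactness.Tn n R -> nat -> R with
  | O => fun _ _ => 0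
  | S n' => fun t i => match i with O => fst t | S i' => of_tuple n' (snd t) i' end
  end.

Lemma to_tuple_bounded n x : (forall i, (i < n)%nat -> 0 <= x i <= 1) ->
  Compactness.bounded_n n (to_tuple n (fun _ => 0)) (to_tuple n (fun _ => 1)) (to_tuple n x).
Proof.
  revert x; induction n as [|n IH]; intros x H; simpl; [exact I|]. split.
  - apply H; lia.
  - apply (IH (fun i => x (S i))). intros; apply H; lia.
Qed.

Lemma to_tuple_close n r x t : Compactness.close_n n r (to_tuple n x) t ->
  forall i, (i < n)%nat -> Rabs (x i - of_tuple n t i) < r.
Proof.
  revert x; induction n as [|n IH]; intros x H i Hi; [lia|].
  destruct t as [t1 t2]. destruct H as [H1 H2].
  destruct i as [|i]; simpl; [assumption|]. apply (IH t2 (fun i => x (S i))); [assumption|lia].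
Qed.

Lemma simplex_complement_open k y : ~ simplex k y -> exists r, 0 < r /\
  forall x, simplex k x -> ~ (forall i, (i < k)%nat -> Rabs (x i - y i) < r).
Proof.
  intros Hy. apply not_and_or in Hy. destruct Hy as [Hy|Hy].
  -
    apply not_all_ex_not in Hy. destruct Hy as [i Hi]. apply imply_to_and in Hi.
    destruct Hi as [Hi Hyi]. exists (- y i). split; [lra|]. intros x [Hx _] Hc.
    specialize (Hc i Hi). specialize (Hx i Hi). rewrite Rabs_right in Hc by lra. lra.
  - (* a total mass D away from 1 cannot be corrected by k moves smaller than D / (k + 1) *)
    set (D := Rabs (sumR k y - 1)).
    assert (HD : 0 < D) by (apply Rabs_pos_lt; lra).
    assert (Hk : 0 <= INR k) by apply pos_INR.
    exists (D / (INR k + 1)). split; [apply Rdiv_lt_0_compat; lra|].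
    intros x [_ Sx] Hc.
    assert (Hsum : Rabs (sumR k x - sumR k y) <= INR k * (D / (INR k + 1))).
    { replace (sumR k x - sumR k y) with (sumR k (fun i => x i - y i))
        by (unfold Rminus; rewrite sumR_plus, sumR_opp; reflexivity).
      rewrite <- sumR_const. apply Rabs_le. split; [rewrite <- sumR_opp|];
        apply sumR_le; intros i Hi; specialize (Hc i Hi); apply Rabs_def2 in Hc; lra. }
    assert (INR k * (D / (INR k + 1)) < D).
    { apply (Rmult_lt_reg_r (INR k + 1)); [lra|]. field_simplify; nra. }
    rewrite Sx in Hsum. unfold D in *. rewrite Rabs_minus_sym in Hsum. lra.
Qed.

(* Radius attached to a point of the box [0,1]^k in the covering argument: at
   most the gauge on the simplex, and off the simplex a ball missing it. *)
Definition cover_radius k (rho : (nat -> R) -> R) (y : nat -> R) (r : R) : Prop :=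
  0 < r /\ (simplex k y -> r <= rho y) /\
  (~ simplex k y -> forall x, simplex k x -> ~ (forall i, (i < k)%nat -> Rabs (x i - y i) < r)).

Lemma simplex_finite_cover k (rho : (nat -> R) -> R) : (forall v, simplex k v -> 0 < rho v) ->
  exists L, (forall v, In v L -> simplex k v) /\
    forall x, simplex k x -> exists v, In v L /\ forall i, (i < k)%nat -> Rabs (x i - v i) < rho v.
Proof.
  intros Hrho.
  assert (Hex : forall t : Compactness.Tn k R, exists r, cover_radius k rho (of_tuple k t) r).
  { intros t. destruct (classic (simplex k (of_tuple k t))) as [Hs|Hs].
    - exists (rho (of_tuple k t)). split; [auto|split; [intros; lra|intros; contradiction]].
    - destruct (simplex_complement_open k _ Hs) as [r [Hr Hc]].
      exists r. split; [assumption|split; [intros; contradiction|intros _; assumption]]. }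
  set (delta := fun t => let s := constructive_indefinite_description _ (Hex t) in
                         mkposreal (proj1_sig s) (proj1 (proj2_sig s))).
  assert (Hd : forall t, cover_radius k rho (of_tuple k t) (pos (delta t))).
  { intros t. unfold delta. simpl. destruct (constructive_indefinite_description _ (Hex t)).
    assumption. }
  apply NNPP. intros Hno.
  apply (Compactness.compactness_list k (to_tuple k (fun _ => 0)) (to_tuple k (fun _ => 1)) delta).
  intros [l Hl]. apply Hno.
  set (in_simplex := fun v => if excluded_middle_informative (simplex k v) then true else false).
  assert (Hin : forall v L, In v (filter in_simplex L) <-> In v L /\ simplex k v).
  { intros v L. rewrite filter_In. unfold in_simplex.
    destruct (excluded_middle_informative (simplex k v)); intuition congruence. }
  exists (filter in_simplex (map (of_tuple k) l)). split; [intros v Hv; apply Hin in Hv; tauto|].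
  intros x Sx.
  destruct (Hl (to_tuple k x)) as [t [Ht [_ Hcl]]].
  { apply to_tuple_bounded. intros; apply (simplex_coord_bound k); assumption. }
  pose proof (to_tuple_close _ _ _ _ Hcl) as Hc.
  destruct (Hd t) as [_ [Hon Hoff]].
  destruct (classic (simplex k (of_tuple k t))) as [Hs|Hs].
  - exists (of_tuple k t). split; [apply Hin; split; [apply in_map|]; assumption|].
    intros i Hi. specialize (Hc i Hi). specialize (Hon Hs). lra.
  - exfalso. exact (Hoff Hs x Sx Hc).
Qed.

Lemma Rabs_sub_triang a b c : Rabs (a - c) <= Rabs (a - b) + Rabs (b - c).
Proof. replace (a - c) with ((a - b) + (b - c)) by ring. apply Rabs_triang. Qed.

Lemma simplex_uniform_continuity k h : continuous_on_simplex k h ->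
  forall e, 0 < e -> exists d, 0 < d /\
  forall x y, simplex k x -> simplex k y -> (forall i, (i < k)%nat -> Rabs (x i - y i) < d) ->
    Rabs (h x - h y) < e.
Proof.
  intros Hc e He.
  assert (Hex : forall v, exists d, 0 < d /\ (simplex k v -> forall q, simplex k q ->
    (forall i, (i < k)%nat -> Rabs (v i - q i) < d) -> Rabs (h v - h q) < e / 2)).
  { intros v. destruct (classic (simplex k v)) as [Hv|Hv].
    - destruct (Hc v Hv (e / 2) ltac:(lra)) as [d [Hd H]]. exists d; split; auto.
    - exists 1; split; [lra|intros; contradiction]. }
  (* half of a continuity radius at each point *)
  set (rho := fun v => proj1_sig (constructive_indefinite_description _ (Hex v)) / 2).
  assert (Hrho : forall v, 0 < rho v /\ (simplex k v -> forall q, simplex k q ->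
    (forall i, (i < k)%nat -> Rabs (v i - q i) < 2 * rho v) -> Rabs (h v - h q) < e / 2)).
  { intros v. unfold rho. destruct (constructive_indefinite_description _ (Hex v)) as [d [Hd H]].
    simpl. replace (2 * (d / 2)) with d by field. split; [lra|assumption]. }
  destruct (simplex_finite_cover k rho) as [L [HL HLcov]]; [intros v _; apply Hrho|].
  exists (MinRlist (map rho L)). split.
  { apply MinRlist_P2. intros r Hr. apply in_map_iff in Hr. destruct Hr as [v [<- _]]. apply Hrho. }
  intros x y Sx Sy Hxy.
  destruct (HLcov x Sx) as [v [Hv Hxv]].
  assert (Hmin : MinRlist (map rho L) <= rho v) by (apply MinRlist_P1, in_map; assumption).
  destruct (Hrho v) as [Hpos Hcont]. specialize (Hcont (HL v Hv)).
  assert (Hx : Rabs (h v - h x) < e / 2).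
  { apply Hcont; [assumption|]. intros i Hi. specialize (Hxv i Hi).
    rewrite Rabs_minus_sym. lra. }
  assert (Hy : Rabs (h v - h y) < e / 2).
  { apply Hcont; [assumption|]. intros i Hi. specialize (Hxv i Hi). specialize (Hxy i Hi).
    pose proof (Rabs_sub_triang (v i) (x i) (y i)). rewrite Rabs_minus_sym in Hxv. lra. }
  pose proof (Rabs_sub_triang (h x) (h v) (h y)). rewrite Rabs_minus_sym in Hx. lra.
Qed.

Lemma simplex_continuous_bounded k h : continuous_on_simplex k h ->
  exists B, 0 <= B /\ forall p, simplex k p -> Rabs (h p) <= B.
Proof.
  intros Hc. destruct (simplex_uniform_continuity k h Hc 1 ltac:(lra)) as [d [Hd Hu]].
  destruct (simplex_finite_cover k (fun _ => d)) as [L [HL HLcov]]; [intros; assumption|].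
  set (top := MaxRlist (map (fun v => Rabs (h v)) L)).
  exists (Rmax 0 top + 1). split; [pose proof (Rmax_l 0 top); lra|].
  intros p Sp. destruct (HLcov p Sp) as [v [Hv Hpv]].
  assert (Rabs (h p - h v) < 1) by (apply Hu; auto).
  assert (Rabs (h v) <= top) by (apply MaxRlist_P1, (in_map (fun v => Rabs (h v))); assumption).
  pose proof (Rmax_r 0 top). pose proof (Rabs_sub_triang (h p) (h v) 0).
  rewrite !Rminus_0_r in *. lra.
Qed.

(** * Uniform approximation by functions of D_0 *)

Lemma Rabs_bounds x c : Rabs x <= c -> - c <= x <= c.
Proof. unfold Rabs. destruct (Rcase_abs x); intros; lra. Qed.

Lemma Rabs_as_max t : Rabs t = Rmax t (- t).
Proof. unfold Rabs, Rmax. destruct (Rcase_abs t), (Rle_dec t (- t)); lra. Qed.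

Lemma Rmax_affine a K C x y : 0 <= K -> 0 < C ->
  (a + K * Rmax x y) / C = Rmax ((a + K * x) / C) ((a + K * y) / C).
Proof.
  intros HK HC.
  assert (Hmono : forall s t, s <= t -> (a + K * s) / C <= (a + K * t) / C).
  { intros s t Hst. unfold Rdiv. apply Rmult_le_compat_r; [|nra].
    apply Rlt_le, Rinv_0_lt_compat; assumption. }
  destruct (Rle_dec x y) as [Hxy|Hxy].
  - rewrite (Rmax_right x y), Rmax_right by (apply Hmono || idtac; assumption). reflexivity.
  - rewrite (Rmax_left x y), Rmax_left by (apply Hmono || idtac; lra). reflexivity.
Qed.

Lemma div_unit_interval x C : 0 < C -> - C <= x <= C -> -1 <= x / C <= 1.
Proof.
  intros HC Hx. unfold Rdiv. replace (-1) with (- C * / C) by (field; lra).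
  replace 1 with (C * / C) by (field; lra).
  split; apply Rmult_le_compat_r; try (apply Rlt_le, Rinv_0_lt_compat); lra.
Qed.

Fixpoint sup_dist (n : nat) (p v : nat -> R) : R :=
  match n with O => 0 | S n' => Rmax (sup_dist n' p v) (Rabs (p n' - v n')) end.

Lemma sup_dist_nonneg n p v : 0 <= sup_dist n p v.
Proof.
  induction n as [|n IH]; simpl; [lra|]. apply Rle_trans with (sup_dist n p v); [assumption|].
  apply Rmax_l.
Qed.

Lemma sup_dist_ge n p v i : (i < n)%nat -> Rabs (p i - v i) <= sup_dist n p v.
Proof.
  induction n as [|n IH]; intros Hi; [lia|]. simpl. destruct (Nat.eq_dec i n) as [->|Hne].
  - apply Rmax_r.
  - apply Rle_trans with (sup_dist n p v); [apply IH; lia|apply Rmax_l].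
Qed.

Lemma sup_dist_lt n p v c : 0 < c -> (forall i, (i < n)%nat -> Rabs (p i - v i) < c) ->
  sup_dist n p v < c.
Proof.
  induction n as [|n IH]; intros Hc H; simpl; [assumption|].
  apply Rmax_lub_lt; [apply IH|apply H]; auto.
Qed.

(* Cones p |-> (a + K |p - v|_oo) / C with apex v in the simplex belong to D_0,
   as maxima of affine functions, provided C dominates the size of their coefficients. *)
Section Cones.
Variables (k : nat) (B K C a : R) (v : nat -> R).
Hypotheses (Ha : Rabs a <= B) (HK : 0 <= K) (HC : 0 < C) (HBKC : B + 2 * K <= C)
  (Hv : forall i, (i < k)%nat -> 0 <= v i <= 1).

Lemma D0_coordinate_affine j s : (j < k)%nat -> Rabs s <= K ->
  D0 k (fun p => (a + s * (p j - v j)) / C).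
Proof.
  intros Hj Hs. apply Rabs_bounds in Ha. apply Rabs_bounds in Hs. destruct (Hv j Hj).
  apply D0_ext with (fun p => sumR k (fun l => p l * ((a - s * v j + s * unit_vec j l) / C))).
  - apply D0_linear. intros l Hl. apply div_unit_interval; [assumption|].
    assert (- K <= s * v j <= K) by (split; nra).
    assert (- K <= s * unit_vec j l <= K) by (unfold unit_vec; destruct (Nat.eqb l j); split; nra).
    lra.
  - intros p [_ Sp].
    rewrite (sumR_ext _ _ (fun l => (a - s * v j) / C * p l + s / C * (unit_vec j l * p l)))
      by (intros; unfold Rdiv; ring).
    rewrite sumR_plus, !sumR_scal, Sp, sumR_unit_vec by assumption. field. lra.
Qed.

Lemma D0_cone n : (n <= k)%nat -> D0 k (fun p => (a + K * sup_dist n p v) / C).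
Proof.
  induction n as [|n IH]; intros Hn.
  - apply D0_ext with (fun p => sumR k (fun l => p l * (a / C))).
    + apply D0_linear. intros. apply div_unit_interval; [assumption|].
      apply Rabs_bounds in Ha. pose proof (Rabs_pos a). lra.
    + intros p [_ Sp]. rewrite (sumR_ext _ _ (fun l => a / C * p l)), sumR_scal, Sp
        by (intros; ring). simpl. field. lra.
  - (* |p - v|_oo on n+1 coordinates is max(|p - v|_oo on n, p_n - v_n, v_n - p_n) *)
    apply D0_ext with (fun p => Rmax ((a + K * sup_dist n p v) / C)
      (Rmax ((a + K * (p n - v n)) / C) ((a + - K * (p n - v n)) / C))).
    + apply D0_max; [apply IH; lia|].
      apply D0_max; apply D0_coordinate_affine; try lia;
        [rewrite Rabs_right|rewrite Rabs_Ropp, Rabs_right]; lra.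
    + intros p _. simpl sup_dist. rewrite Rmax_affine by assumption. f_equal.
      rewrite Rabs_as_max, Rmax_affine by assumption. f_equal; f_equal; ring.
Qed.

End Cones.

Definition min_over (F : (nat -> R) -> (nat -> R) -> R) (v0 : nat -> R)
  (L : list (nat -> R)) (p : nat -> R) : R :=
  fold_right (fun v acc => Rmin (F v p) acc) (F v0 p) L.

Lemma D0_min_over k F v0 L : (forall v, In v (v0 :: L) -> D0 k (F v)) ->
  D0 k (min_over F v0 L).
Proof.
  induction L as [|v L IH]; intros H; unfold min_over; simpl.
  - apply H. left. reflexivity.
  - apply (D0_min k (F v) (min_over F v0 L)); [apply H; right; left; reflexivity|].
    apply IH. intros w [<-|Hw]; apply H; [left|right; right]; auto.
Qed.

Lemma min_over_le F v0 L p v : In v (v0 :: L) -> min_over F v0 L p <= F v p.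
Proof.
  induction L as [|w L IH]; unfold min_over; simpl; intros Hv.
  - destruct Hv as [<-|[]]. lra.
  - destruct Hv as [<-|[<-|Hv]]; [|apply Rmin_l|];
      (apply Rle_trans with (min_over F v0 L p); [apply Rmin_r|apply IH]); simpl; auto.
Qed.

Lemma min_over_ge F v0 L p c : (forall v, In v (v0 :: L) -> c <= F v p) ->
  c <= min_over F v0 L p.
Proof.
  induction L as [|w L IH]; unfold min_over; simpl; intros H.
  - apply H. left. reflexivity.
  - apply Rmin_glb; [apply H; right; left; reflexivity|].
    apply IH. intros v [<-|Hv]; apply H; [left|right; right]; auto.
Qed.

(* Estimates for the inf-convolution of h with cones of slope K, for h uniformly
   continuous (modulus d at scale e) and bounded by B. *)
Section Cone_estimates.
Variables (k : nat) (h : (nat -> R) -> R) (e d B K : R).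
Hypotheses (Hunif : forall x y, simplex k x -> simplex k y ->
              (forall i, (i < k)%nat -> Rabs (x i - y i) < d) -> Rabs (h x - h y) < e)
  (HB : forall p, simplex k p -> Rabs (h p) <= B) (He : 0 < e) (HK : 0 <= K)
  (HKd : 2 * B <= K * d).

(* Every cone lies above h - e: near its apex by continuity, far from it by steepness. *)
Lemma cone_above p v : simplex k p -> simplex k v -> h p - e <= h v + K * sup_dist k p v.
Proof.
  intros Sp Sv. destruct (Rlt_dec (sup_dist k p v) d) as [Hnear|Hfar].
  - assert (Hclose : Rabs (h p - h v) < e).
    { apply Hunif; [assumption..|]. intros i Hi. pose proof (sup_dist_ge k p v i Hi). lra. }
    apply Rabs_def2 in Hclose.
    pose proof (Rmult_le_pos _ _ HK (sup_dist_nonneg k p v)). lra.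
  - assert (K * d <= K * sup_dist k p v) by (apply Rmult_le_compat_l; lra).
    pose proof (Rabs_bounds _ _ (HB p Sp)). pose proof (Rabs_bounds _ _ (HB v Sv)). lra.
Qed.

Lemma cone_near_apex p v eta : simplex k p -> simplex k v -> eta <= d -> K * eta <= e ->
  sup_dist k p v < eta -> h v + K * sup_dist k p v <= h p + 2 * e.
Proof.
  intros Sp Sv Heta HKeta Hpv.
  assert (Hclose : Rabs (h p - h v) < e).
  { apply Hunif; [assumption..|]. intros i Hi. pose proof (sup_dist_ge k p v i Hi). lra. }
  apply Rabs_def2 in Hclose.
  assert (K * sup_dist k p v <= K * eta) by (apply Rmult_le_compat_l; lra).
  lra.
Qed.

Lemma cone_min_sandwich C eta v0 L p : 0 < C -> 0 < eta -> eta <= d -> K * eta <= e ->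
  (forall v, In v (v0 :: L) -> simplex k v) ->
  (forall x, simplex k x ->
     exists v, In v L /\ forall i, (i < k)%nat -> Rabs (x i - v i) < eta) ->
  simplex k p ->
  h p - e <= C * min_over (fun v q => (h v + K * sup_dist k q v) / C) v0 L p <= h p + 2 * e.
Proof.
  intros HC Heta Hetad HKeta Hapex Hcov Sp. set (F := fun v q => (h v + K * sup_dist k q v) / C).
  split.
  - assert (Hge : (h p - e) / C <= min_over F v0 L p).
    { apply min_over_ge. intros v Hv. unfold F, Rdiv. apply Rmult_le_compat_r.
      - apply Rlt_le, Rinv_0_lt_compat; assumption.
      - apply cone_above; [assumption|apply Hapex; assumption]. }
    apply (Rmult_le_compat_l C) in Hge; [|lra].
    replace (C * ((h p - e) / C)) with (h p - e) in Hge by (field; lra). exact Hge.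
  - destruct (Hcov p Sp) as [v [Hv Hpv]].
    pose proof (min_over_le F v0 L p v (or_intror Hv)) as Hle.
    apply (Rmult_le_compat_l C) in Hle; [|lra].
    replace (C * F v p) with (h v + K * sup_dist k p v) in Hle by (unfold F; field; lra).
    pose proof (cone_near_apex p v eta Sp (Hapex v (or_intror Hv)) Hetad HKeta
                  (sup_dist_lt k p v eta Heta Hpv)).
    lra.
Qed.

End Cone_estimates.

Theorem D0_dense k h : (1 <= k)%nat -> continuous_on_simplex k h -> forall eps, 0 < eps ->
  exists C g, D0 k g /\ forall p, simplex k p -> Rabs (h p - C * g p) <= eps.
Proof.
  intros Hk Hc eps Heps. set (e := eps / 2).
  destruct (simplex_uniform_continuity k h Hc e ltac:(unfold e; lra)) as [d [Hd Hunif]].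
  destruct (simplex_continuous_bounded k h Hc) as [B [HB0 HB]].
  set (K := 2 * B / d).
  assert (HK : 0 <= K)
    by (unfold K, Rdiv; apply Rmult_le_pos; [lra|apply Rlt_le, Rinv_0_lt_compat; lra]).
  assert (HKd : 2 * B <= K * d) by (unfold K; apply Req_le; field; lra).
  set (eta := Rmin d (e / (K + 1))).
  assert (Heta : 0 < eta) by (apply Rmin_pos; [|apply Rdiv_lt_0_compat]; unfold e; lra).
  assert (HKeta : K * eta <= e).
  { apply Rle_trans with (K * (e / (K + 1))); [apply Rmult_le_compat_l, Rmin_r; assumption|].
    apply (Rmult_le_reg_r (K + 1)); [lra|]. field_simplify; [|lra]. unfold e; nra. }
  destruct (simplex_finite_cover k (fun _ => eta)) as [L [HL HLcov]]; [intros; assumption|].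
  set (C := B + 2 * K + 1).
  (* the apexes: the net L and one more simplex point making the list nonempty *)
  set (v0 := unit_vec 0).
  assert (Hapex : forall v, In v (v0 :: L) -> simplex k v).
  { intros v [<-|Hv]; [apply simplex_unit_vec; lia|auto]. }
  exists C, (min_over (fun v q => (h v + K * sup_dist k q v) / C) v0 L). split.
  - apply D0_min_over. intros v Hv. pose proof (Hapex v Hv) as Sv.
    apply (D0_cone k B K C (h v) v); [apply HB; assumption|assumption|unfold C; lra..| |lia].
    intros i Hi. apply (simplex_coord_bound k); assumption.
  - intros p Sp.
    destruct (cone_min_sandwich k h e d B K Hunif HB ltac:(unfold e; lra) HK HKd C eta v0 L p
                ltac:(unfold C; lra) Heta (Rmin_l _ _) HKeta Hapex HLcov Sp) as [Hlo Hhi].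
    apply Rabs_le. unfold e in *. lra.
Qed.

Theorem lemma2 (k : nat) (Hk : (1 <= k)%nat) :
  (forall f g : (nat -> R) -> R, D0 k f -> D0 k g ->
     D0 k (fun p => - f p) /\
     D0 k (fun p => Rmax (f p) (g p)) /\
     D0 k (fun p => Rmin (f p) (g p)) /\
     (forall lam, 0 <= lam <= 1 ->
        D0 k (fun p => lam * f p + (1 - lam) * g p))) /\
  (forall h : (nat -> R) -> R, continuous_on_simplex k h ->
     forall eps, 0 < eps ->
       exists (N : nat) (c : nat -> R) (fs : nat -> (nat -> R) -> R),
         (forall i, (i < N)%nat -> D0 k (fs i)) /\
         (forall p, simplex k p ->
            Rabs (h p - sumR N (fun i => c i * fs i p)) <= eps)).
Proof.
  split.
  - intros f g Hf Hg.
    split; [apply D0_neg; assumption|].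
    split; [apply D0_max; assumption|].
    split; [apply D0_min; assumption|].
    intros lam Hlam. apply D0_conv; assumption.
  - (* a single multiple of a function of D_0 already approximates h *)
    intros h Hc eps Heps. destruct (D0_dense k h Hk Hc eps Heps) as [C [g [Hg Happrox]]].
    exists 1%nat, (fun _ => C), (fun _ => g). split; [intros; assumption|].
    intros p Sp. simpl. rewrite Rplus_0_l. apply Happrox; assumption.
Qed.
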